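(* Under the hypotheses of Theorem 3.1 (namely: $\phi\in\Phi$, $f:\mathbb{R}^n\to(-\infty,+\infty]$ proper lsc, $\Omega\subseteq\mathbb{R}^n$ closed, $\delta\ge0$, $p\in[1,\infty]$, $\mathcal{J}=\{J_1,\dots,J_m\}$ a partition of $\{1,\dots,n\}$, the problem $\min_x\{\|G_{\mathcal{J},p}(x)\|_0: f(x)\le\delta,x\in\Omega\}$ has a nonempty global optimal solution set with nonzero optimal value $s^*$, and there is $\alpha>0$ with $\pi_{s^*}(G_{\mathcal{J},p}(x))\ge\alpha$ for all $x\in\Omega$ with $f(x)\le\delta$), for every $\varrho>\phi'_-(1)/\alpha$ the problem $\min_x\{\|G_{\mathcal{J},p}(x)\|_0: f(x)\le\delta,x\in\Omega\}$ has the same set of global optimal solutions as $$\textstyle\min_{x\in\mathbb{R}^n}\Big\{\varrho\sum_{i=1}^m\|x_{J_i}\|_p-\sum_{i=1}^m\psi^*(\varrho\|x_{J_i}\|_p):\ f(x)\le\delta,\ x\in\Omega\Big\}.$$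
   Context: $\Phi$ is the family of proper lsc functions $\phi:\mathbb{R}\to(-\infty,+\infty]$ with $\mathrm{int}(\mathrm{dom}\,\phi)\supseteq[0,1]$, convex on $[0,1]$, such that $\min_{t\in[0,1]}\phi(t)=0$ is attained at a (fixed) point $t^*\in[0,1)$, and $\phi(1)=1$; $\phi'_-(1)$ is the left derivative at $1$. $\psi(t)=\phi(t)$ for $t\in[0,1]$ and $\psi(t)=+\infty$ otherwise; $\psi^*(s)=\sup_{t\in\mathbb{R}}\{st-\psi(t)\}$. $G_{\mathcal{J},p}(x):=(\|x_{J_1}\|_p,\dots,\|x_{J_m}\|_p)^T$; $\|v\|_0$ counts nonzero entries; $\pi_i(v)$ is the $i$-th largest entry of $|v|$. *)

From mathcomp Require Import all_boot.
From Stdlib Require Import Reals ClassicalEpsilon.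

Set Implicit Arguments.
Unset Strict Implicit.

Inductive ereal := Fin (r : R) | PInf.

Definition er_val (e : ereal) : R := match e with Fin r => r | PInf => 0%R end.
Definition er_lt (c : R) (e : ereal) : Prop :=
  match e with Fin r => (c < r)%R | PInf => True end.
Definition er_le (e : ereal) (c : R) : Prop :=
  match e with Fin r => (r <= c)%R | PInf => False end.
Definition er_finite (e : ereal) : Prop := exists r, e = Fin r.

(* R^n as functions on {0,...,n-1}; sup-norm distance (same topology as Euclidean). *)
Definition vec (n : nat) := 'I_n -> R.
Definition vdist (n : nat) (x y : vec n) : R :=
  \big[Rmax/0%R]_(i : 'I_n) Rabs (x i - y i).

Definition proper_fn (X : Type) (g : X -> ereal) : Prop := exists x, er_finite (g x).
Definition lsc_vec (n : nat) (g : vec n -> ereal) : Prop :=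
  forall x (c : R), er_lt c (g x) ->
    exists d, (0 < d)%R /\ forall y, (vdist x y < d)%R -> er_lt c (g y).
Definition lsc_R (g : R -> ereal) : Prop :=
  forall x (c : R), er_lt c (g x) ->
    exists d, (0 < d)%R /\ forall y, (Rabs (y - x) < d)%R -> er_lt c (g y).
Definition closed_vec (n : nat) (Om : vec n -> Prop) : Prop :=
  forall x, (forall eps, (0 < eps)%R -> exists y, Om y /\ (vdist x y < eps)%R) -> Om x.

Definition in_Phi (phi : R -> ereal) (tstar : R) : Prop :=
  proper_fn phi /\ lsc_R phi /\
  (* int(dom phi) contains [0,1] *)
  (forall t, (0 <= t <= 1)%R -> exists e, (0 < e)%R /\
      forall u, (Rabs (u - t) < e)%R -> er_finite (phi u)) /\
  (forall t1 t2 l, (0 <= t1 <= 1)%R -> (0 <= t2 <= 1)%R -> (0 <= l <= 1)%R ->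
      (er_val (phi (l * t1 + (1 - l) * t2)) <=
       l * er_val (phi t1) + (1 - l) * er_val (phi t2))%R) /\
  (0 <= tstar < 1)%R /\ phi tstar = Fin 0 /\
  (forall t, (0 <= t <= 1)%R -> (0 <= er_val (phi t))%R) /\
  phi 1%R = Fin 1.

Definition left_deriv_at1 (phi : R -> ereal) (d : R) : Prop :=
  forall eps, (0 < eps)%R -> exists eta, (0 < eta)%R /\
    forall t, (1 - eta < t < 1)%R ->
      (Rabs ((er_val (phi t) - er_val (phi 1%R)) / (t - 1) - d) < eps)%R.

Definition Rsup (E : R -> Prop) : R := epsilon (inhabits 0%R) (fun v => is_lub E v).

Definition psi (phi : R -> ereal) (t : R) : ereal :=
  match Rle_dec 0 t, Rle_dec t 1 with left _, left _ => phi t | _, _ => PInf end.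
Definition psi_star (phi : R -> ereal) (s : R) : R :=
  Rsup (fun y => exists t r, psi phi t = Fin r /\ y = (s * t - r)%R).

Inductive pexp := PFin (p : R) | PInfty.
Definition valid_p (p : pexp) : Prop :=
  match p with PFin q => (1 <= q)%R | PInfty => True end.

Definition rpow (a b : R) : R := if Rlt_dec 0 a then Rpower a b else 0%R.

Definition is_partition (n m : nat) (J : 'I_m -> {set 'I_n}) : Prop :=
  (forall k, exists i, i \in J k) /\
  (forall k l i, k <> l -> i \in J k -> i \in J l -> False) /\
  (forall i, exists k, i \in J k).

Definition block_norm (n m : nat) (J : 'I_m -> {set 'I_n}) (p : pexp)
  (x : vec n) (k : 'I_m) : R :=
  match p with
  | PFin q => rpow (\big[Rplus/0%R]_(i : 'I_n | i \in J k) rpow (Rabs (x i)) q) (/ q)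
  | PInfty => \big[Rmax/0%R]_(i : 'I_n | i \in J k) Rabs (x i)
  end.

Definition G (n m : nat) (J : 'I_m -> {set 'I_n}) (p : pexp) (x : vec n) : 'I_m -> R :=
  fun k => block_norm J p x k.

Definition l0 (m : nat) (v : 'I_m -> R) : nat :=
  \sum_(k : 'I_m) (if Req_EM_T (v k) 0%R then 0 else 1)%N.

(* pi_i(v): the i-th largest entry of |v| (i >= 1) *)
Definition Rgeb (a b : R) : bool := if Rle_dec b a then true else false.
Definition pi_i (m : nat) (i : nat) (v : 'I_m -> R) : R :=
  nth 0%R (sort Rgeb [seq Rabs (v k) | k <- enum 'I_m]) i.-1.

Definition feasible (n : nat) (f : vec n -> ereal) (Om : vec n -> Prop) (delta : R)
  (x : vec n) : Prop := Om x /\ er_le (f x) delta.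

Definition opt_l0 (n m : nat) (J : 'I_m -> {set 'I_n}) (p : pexp)
  (f : vec n -> ereal) (Om : vec n -> Prop) (delta : R) (x : vec n) : Prop :=
  feasible f Om delta x /\
  forall y, feasible f Om delta y -> (l0 (G J p x) <= l0 (G J p y))%N.

Definition surrogate_obj (n m : nat) (J : 'I_m -> {set 'I_n}) (p : pexp)
  (phi : R -> ereal) (rho : R) (x : vec n) : R :=
  (rho * (\big[Rplus/0%R]_(k : 'I_m) G J p x k)
   - \big[Rplus/0%R]_(k : 'I_m) psi_star phi (rho * G J p x k))%R.

Definition opt_surrogate (n m : nat) (J : 'I_m -> {set 'I_n}) (p : pexp)
  (phi : R -> ereal) (rho : R)
  (f : vec n -> ereal) (Om : vec n -> Prop) (delta : R) (x : vec n) : Prop :=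
  feasible f Om delta x /\
  forall y, feasible f Om delta y ->
    (surrogate_obj J p phi rho x <= surrogate_obj J p phi rho y)%R.

(* Write h(s) := s - psi^*(s), so that the surrogate objective is sum_k h(rho ||x_{J_k}||_p).
   Convexity of phi on [0,1] with phi(1) = 1 puts phi above its left tangent line at 1, which
   gives h(0) = 0, 0 < h(s) <= 1 for s > 0 and h(s) = 1 for s >= phi'_-(1).  Since
   rho alpha > phi'_-(1), the surrogate is squeezed between the number of blocks of norm at
   least alpha, which is at least s^* on the feasible set, and ||G(x)||_0.  Hence both problems
   have optimal value s^*, and a feasible point of surrogate value s^* has no nonzero block
   below alpha, so its block support has size at most s^*. *)

From mathcomp Require Import all_boot.
From Stdlib Require Import Reals Lra ClassicalEpsilon Classical.
Open Scope R_scope.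
Set Implicit Arguments.
Unset Strict Implicit.

Section Conjugate.
Variables (phi : R -> ereal) (tstar : R).
Hypothesis Hphi : in_Phi phi tstar.

Lemma in_Phi_at1 : phi 1 = Fin 1.
Proof. by case: Hphi => [_ [_ [_ [_ [_ [_ [_ ->]]]]]]]. Qed.

Lemma in_Phi_ge0 t : 0 <= t <= 1 -> 0 <= er_val (phi t).
Proof. by case: Hphi => [_ [_ [_ [_ [_ [_ [H _]]]]]]]; apply: H. Qed.

Lemma in_Phi_fin t : 0 <= t <= 1 -> phi t = Fin (er_val (phi t)).
Proof.
case: Hphi => [_ [_ [Hdom _]]] Ht; have [e [He Hfin]] := Hdom t Ht.
have [r ->] := Hfin t ltac:(rewrite Rminus_diag Rabs_R0; lra); done.
Qed.

Lemma secant_slope_to1_le t u : 0 <= t -> t < u -> u < 1 ->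
  (1 - er_val (phi t)) / (1 - t) <= (1 - er_val (phi u)) / (1 - u).
Proof.
case: Hphi => [_ [_ [_ [Hconv _]]]] Ht Htu Hu1.
set l := (1 - u) / (1 - t).
have Hlt : l * (1 - t) = 1 - u by rewrite /l; field; lra.
have Hl : 0 <= l <= 1 by split; nra.
have := Hconv t 1 l ltac:(lra) ltac:(lra) Hl.
have -> : l * t + (1 - l) * 1 = u by rewrite /l; field; lra.
rewrite in_Phi_at1 /= => Hconv_u.
have -> : (1 - er_val (phi t)) / (1 - t) = l * (1 - er_val (phi t)) / (1 - u)
  by rewrite /l; field; lra.
apply: Rmult_le_compat_r; [apply/Rlt_le/Rinv_0_lt_compat |]; lra.
Qed.

Variable d : R.
Hypothesis Hd : left_deriv_at1 phi d.

(* The secant slopes to (1, 1) increase towards d, so none of them exceeds d. *)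
Lemma phi_ge_tangent_at1 t : 0 <= t <= 1 -> 1 + d * (t - 1) <= er_val (phi t).
Proof.
move=> Ht; have [-> | Ht1] := Req_dec t 1; first by rewrite in_Phi_at1 /=; lra.
apply: Rnot_lt_le => Hlt.
set q := (1 - er_val (phi t)) / (1 - t).
have Hdq : 0 < q - d.
  apply: (Rmult_lt_reg_r (1 - t)); first lra.
  rewrite Rmult_minus_distr_r /q /Rdiv Rmult_assoc Rinv_l; lra.
have [eta [Heta Hnear]] := Hd Hdq.
have Hml := Rmax_l t (1 - eta); have Hmr := Rmax_r t (1 - eta).
have Hmax : Rmax t (1 - eta) < 1 by apply: Rmax_lub_lt; lra.
set u := (Rmax t (1 - eta) + 1) / 2.
have Htu : t < u by rewrite /u; lra.
have Hu1 : u < 1 by rewrite /u; lra.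
have Hslope : q <= _ := secant_slope_to1_le (proj1 Ht) Htu Hu1.
have := Hnear u ltac:(rewrite /u; lra); rewrite in_Phi_at1 /=.
have -> : (er_val (phi u) - 1) / (u - 1) = (1 - er_val (phi u)) / (1 - u) by field; lra.
by move=> /Rabs_def2; lra.
Qed.

Lemma left_deriv_at1_gt0 : 0 < d.
Proof.
case: Hphi => [_ [_ [_ [_ [[Ht0 Ht1] [Hmin _]]]]]].
have := phi_ge_tangent_at1 (conj Ht0 (Rlt_le _ _ Ht1)); rewrite Hmin /=; nra.
Qed.

Let conj_set s := fun y => exists t r, psi phi t = Fin r /\ y = s * t - r.

Lemma psi_finE t r : psi phi t = Fin r -> 0 <= t <= 1 /\ phi t = Fin r.
Proof. by rewrite /psi; case: (Rle_dec 0 t) => [?|//]; case: (Rle_dec t 1). Qed.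

Lemma psi_on t : 0 <= t <= 1 -> psi phi t = phi t.
Proof. by move=> Ht; rewrite /psi; case: (Rle_dec 0 t); case: (Rle_dec t 1) => //; lra. Qed.

(* The set defining psi^*(s) is nonempty (t = 1) and bounded by |s|, since phi >= 0 on [0,1]. *)
Lemma psi_star_lub s : is_lub (conj_set s) (psi_star phi s).
Proof.
rewrite /psi_star /Rsup; apply: epsilon_spec.
have [||v Hv] := @completeness (conj_set s); last by exists v.
- exists (Rabs s) => y [t [r [/psi_finE [Ht Hr] ->]]].
  have := in_Phi_ge0 Ht; rewrite Hr /= => Hr0.
  have := Rle_abs s; have := Rle_abs (- s); rewrite Rabs_Ropp; nra.
- by exists (s * 1 - 1), 1, 1; rewrite psi_on ?in_Phi_at1 //; lra.
Qed.

Lemma psi_star_le s b :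
  (forall t, 0 <= t <= 1 -> s * t - er_val (phi t) <= b) -> psi_star phi s <= b.
Proof.
move=> Hb; apply: (proj2 (psi_star_lub s)) => y [t [r [/psi_finE [Ht Hr] ->]]].
by have := Hb t Ht; rewrite Hr.
Qed.

Lemma le_psi_star s t : 0 <= t <= 1 -> s * t - er_val (phi t) <= psi_star phi s.
Proof.
move=> Ht; apply: (proj1 (psi_star_lub s)).
by exists t, (er_val (phi t)); rewrite psi_on // -in_Phi_fin.
Qed.

Definition surrogate_term s := s - psi_star phi s.

Lemma surrogate_term0 : surrogate_term 0 = 0.
Proof.
rewrite /surrogate_term; suff -> : psi_star phi 0 = 0 by lra.
case: Hphi => [_ [_ [_ [_ [[Ht0 Ht1] [Hmin _]]]]]].
apply: Rle_antisym.
- by apply: psi_star_le => t /in_Phi_ge0; lra.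
- by have := le_psi_star 0 (conj Ht0 (Rlt_le _ _ Ht1)); rewrite Hmin /=; lra.
Qed.

Lemma surrogate_term_le1 s : surrogate_term s <= 1.
Proof.
have := le_psi_star s (conj Rle_0_1 (Rle_refl 1)).
by rewrite in_Phi_at1 /surrogate_term /=; lra.
Qed.

Lemma surrogate_term_ge0 s : 0 <= s -> 0 <= surrogate_term s.
Proof.
move=> Hs; rewrite /surrogate_term; suff : psi_star phi s <= s by lra.
by apply: psi_star_le => t Ht; have := in_Phi_ge0 Ht; nra.
Qed.

Lemma surrogate_term_ge1 s : d <= s -> 1 <= surrogate_term s.
Proof.
move=> Hs; rewrite /surrogate_term; suff : psi_star phi s <= s - 1 by lra.
by apply: psi_star_le => t Ht; have := phi_ge_tangent_at1 Ht; nra.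
Qed.

(* The tangent line bounds phi away from 0 near 1 and phi >= 0 away from 1, so
   s t - phi t <= s - e with e := min (1/2) (s / (2 d)). *)
Lemma surrogate_term_gt0 s : 0 < s -> 0 < surrogate_term s.
Proof.
move=> Hs; have Hd0 := left_deriv_at1_gt0.
set e := Rmin (1/2) (s / (2 * d)).
have He : 0 < e by apply: Rmin_glb_lt; [lra | apply: Rdiv_lt_0_compat; lra].
have He1 : e <= 1/2 by apply: Rmin_l.
have He2 : e * (2 * d) <= s.
  have := Rmin_r (1/2) (s / (2 * d)); rewrite -/e => Hle.
  have -> : s = s / (2 * d) * (2 * d) by field; lra.
  by apply: Rmult_le_compat_r; lra.
rewrite /surrogate_term; suff : psi_star phi s <= s - e by lra.
apply: psi_star_le => t Ht.
have := phi_ge_tangent_at1 Ht; have := in_Phi_ge0 Ht.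
have [Hnear | Hfar] := Rle_lt_dec (d * (1 - t)) (1/2); nra.
Qed.

End Conjugate.

Lemma INR_sum (I : Type) (r : seq I) (P : pred I) (c : I -> nat) :
  INR (\sum_(k <- r | P k) c k) = \big[Rplus/0]_(k <- r | P k) INR (c k).
Proof. exact: (big_morph INR plus_INR). Qed.

Lemma Rsum_le (I : Type) (r : seq I) (P : pred I) (h1 h2 : I -> R) :
  (forall k, P k -> h1 k <= h2 k) ->
  \big[Rplus/0]_(k <- r | P k) h1 k <= \big[Rplus/0]_(k <- r | P k) h2 k.
Proof. by apply: big_ind2 => [|a b c d]; lra. Qed.

Lemma Rsum_lt (I : eqType) (r : seq I) (h1 h2 : I -> R) k0 :
  (forall k, h1 k <= h2 k) -> k0 \in r -> h1 k0 < h2 k0 ->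
  \big[Rplus/0]_(k <- r) h1 k < \big[Rplus/0]_(k <- r) h2 k.
Proof.
move=> Hle; elim: r => [|k r IH] //; rewrite in_cons !big_cons => /orP [/eqP -> | /IH].
- by have := @Rsum_le _ r xpredT h1 h2 (fun k _ => Hle k); lra.
- by have := Hle k; lra.
Qed.

Lemma Rmul_sum_sub (I : Type) (r : seq I) (c : R) (g w : I -> R) :
  c * \big[Rplus/0]_(k <- r) g k - \big[Rplus/0]_(k <- r) w k =
  \big[Rplus/0]_(k <- r) (c * g k - w k).
Proof. by apply: (big_ind3 (fun a b e => c * a - b = e)) => *; lra. Qed.

Lemma RgebP a b : reflect (b <= a) (Rgeb a b).
Proof. by rewrite /Rgeb; case: Rle_dec => H; constructor. Qed.

Lemma Rgeb_trans : transitive Rgeb.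
Proof. by move=> y x z /RgebP Hyx /RgebP Hzy; apply/RgebP; lra. Qed.

Lemma Rgeb_refl : reflexive Rgeb.
Proof. by move=> x; apply/RgebP; lra. Qed.

Lemma Rgeb_total : total Rgeb.
Proof.
by move=> x y; case: (Rle_lt_dec y x) => H; apply/orP; [left | right]; apply/RgebP; lra.
Qed.

Definition nb_ge (m : nat) (a : R) (v : 'I_m -> R) : nat :=
  \sum_(k : 'I_m) (if Rgeb (Rabs (v k)) a then 1 else 0)%nat.

(* The s largest entries of |v| all dominate pi_s(v); since a > 0 and the default value of
   nth is 0, a <= pi_s(v) also forces |v| to have at least s entries. *)
Lemma nb_ge_pi (m s : nat) (a : R) (v : 'I_m -> R) :
  0 < a -> s <> 0%nat -> a <= pi_i s v -> (s <= nb_ge a v)%nat.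
Proof.
move=> Ha Hs; rewrite /pi_i; set sv := sort _ _ => Hpi.
have -> : nb_ge a v = count (fun y => Rgeb y a) sv.
  rewrite count_sort count_map /nb_ge -big_mkcond sum1_count.
  by rewrite [index_enum _]unlock -enumT.
have Hsorted : sorted Rgeb sv by apply: sort_sorted; exact: Rgeb_total.
have Hs0 : (0 < s)%nat by rewrite lt0n; apply/eqP.
have Hsize : (s <= size sv)%nat.
  rewrite -(prednK Hs0) ltnNge; apply/negP => Hle.
  by move: Hpi; rewrite nth_default //; lra.
have Htake : all (fun y => Rgeb y a) (take s sv).
  apply/(all_nthP 0) => i; rewrite size_takel // => Hi; rewrite nth_take //.
  apply: Rgeb_trans (nth 0 sv s.-1) _ _ _ (_ : Rgeb _ a); last exact/RgebP.
  apply: (sorted_leq_nth Rgeb_trans Rgeb_refl) => //; rewrite ?inE.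
  - exact: leq_trans Hi Hsize.
  - by apply: leq_trans Hsize; rewrite prednK.
  - by rewrite -ltnS prednK.
rewrite -(cat_take_drop s sv) count_cat.
by move: Htake; rewrite all_count => /eqP ->; rewrite size_takel // leq_addr.
Qed.

Section SurrogateBounds.
Variables (phi : R -> ereal) (tstar d : R).
Hypothesis Hphi : in_Phi phi tstar.
Hypothesis Hd : left_deriv_at1 phi d.
Variables (m : nat) (rho alpha : R) (w : 'I_m -> R).
Hypothesis Halpha : 0 < alpha.
Hypothesis Hrho : d < rho * alpha.
Hypothesis Hw : forall k, 0 <= w k.

Lemma sum_surrogate_term_le_l0 :
  \big[Rplus/0]_(k : 'I_m) surrogate_term phi (rho * w k) <= INR (l0 w).
Proof.
rewrite /l0 INR_sum; apply: Rsum_le => k _.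
case: Req_EM_T => [Hk | _] /=; last exact: surrogate_term_le1 Hphi _.
by rewrite Hk Rmult_0_r (surrogate_term0 Hphi); lra.
Qed.

Lemma rho_gt0 : 0 < rho.
Proof. by have := left_deriv_at1_gt0 Hphi Hd; nra. Qed.

Lemma indicator_le_surrogate_term k :
  INR (if Rgeb (Rabs (w k)) alpha then 1 else 0)%nat <= surrogate_term phi (rho * w k).
Proof.
have Hr := rho_gt0; rewrite Rabs_pos_eq //; case: RgebP => Hk /=.
- have /(surrogate_term_ge1 Hphi Hd) : d <= rho * w k by nra.
  lra.
- have /(surrogate_term_ge0 Hphi) : 0 <= rho * w k by have := Hw k; nra.
  lra.
Qed.

Lemma nb_ge_le_sum_surrogate_term :
  INR (nb_ge alpha w) <= \big[Rplus/0]_(k : 'I_m) surrogate_term phi (rho * w k).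
Proof. by rewrite /nb_ge INR_sum; apply: Rsum_le => k _; exact: indicator_le_surrogate_term. Qed.

(* A nonzero block below alpha contributes to the surrogate but not to the count, so the
   two can only meet when every nonzero block is at least alpha, i.e. when l0 w <= nb_ge. *)
Lemma l0_le_of_sum_surrogate_term_le (s : nat) :
  (s <= nb_ge alpha w)%nat ->
  \big[Rplus/0]_(k : 'I_m) surrogate_term phi (rho * w k) <= INR s ->
  (l0 w <= s)%nat.
Proof.
move=> /leP /le_INR Hcount Hsum.
have [[k [Hk0 Hklt]] | Hlarge] := classic (exists k, w k <> 0 /\ w k < alpha).
- exfalso; suff : INR (nb_ge alpha w) < INR s by lra.
  apply: Rlt_le_trans Hsum; rewrite /nb_ge INR_sum.
  apply: (Rsum_lt (k0 := k)) => [j | | ]; first exact: indicator_le_surrogate_term.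
  + exact: mem_index_enum.
  + rewrite Rabs_pos_eq //; case: RgebP => [|_] /=; first lra.
    have /(surrogate_term_gt0 Hphi Hd) : 0 < rho * w k.
      by have := rho_gt0; have := Hw k; nra.
    lra.
- apply: (@leq_trans (nb_ge alpha w)).
    apply: leq_sum => k _; case: Req_EM_T => // Hk0.
    case: RgebP => // /Rnot_le_lt; rewrite Rabs_pos_eq // => Hklt.
    by case: Hlarge; exists k.
  by apply/leP/INR_le; have := nb_ge_le_sum_surrogate_term; lra.
Qed.

End SurrogateBounds.

Lemma block_norm_ge0 (n m : nat) (J : 'I_m -> {set 'I_n}) p x k : 0 <= block_norm J p x k.
Proof.
rewrite /block_norm; case: p => [q|].
- rewrite /rpow; case: Rlt_dec => [_ | _] /=; [exact: Rlt_le (exp_pos _) | lra].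
- apply: (big_ind (fun y => 0 <= y)) => [|a b Ha _|i _]; [lra | | exact: Rabs_pos].
  by have := Rmax_l a b; lra.
Qed.

Lemma surrogate_objE (n m : nat) (J : 'I_m -> {set 'I_n}) p phi rho x :
  surrogate_obj J p phi rho x =
  \big[Rplus/0]_(k : 'I_m) surrogate_term phi (rho * G J p x k).
Proof. exact: Rmul_sum_sub. Qed.

Close Scope R_scope.
Unset Implicit Arguments.
Set Strict Implicit.

Theorem corollary3p1
  (phi : R -> ereal) (tstar : R) (n m : nat)
  (f : vec n -> ereal) (Om : vec n -> Prop) (delta : R) (p : pexp)
  (J : 'I_m -> {set 'I_n}) (sstar : nat) (alpha : R) (dphi : R)
  (Hphi : in_Phi phi tstar)
  (Hf_proper : proper_fn f) (Hf_lsc : lsc_vec f)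
  (HOm : closed_vec Om) (Hdelta : (0 <= delta)%R) (Hp : valid_p p)
  (HJ : is_partition J)
  (Hsstar : exists x0, opt_l0 J p f Om delta x0 /\ l0 (G J p x0) = sstar)
  (Hsstar0 : sstar <> 0%N)
  (Halpha : (0 < alpha)%R)
  (Hpi : forall x, feasible f Om delta x -> (alpha <= pi_i sstar (G J p x))%R)
  (Hdphi : left_deriv_at1 phi dphi) :
  forall rho : R, (dphi / alpha < rho)%R ->
    forall x : vec n,
      opt_l0 J p f Om delta x <-> opt_surrogate J p phi rho f Om delta x.
Proof.
Open Scope R_scope.
move=> rho Hrho x.
have Hra : dphi < rho * alpha.
  have -> : dphi = dphi / alpha * alpha by field; lra.
  exact: Rmult_lt_compat_r.
have HG y k : 0 <= G J p y k := block_norm_ge0 J p y k.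
have Hupper y : surrogate_obj J p phi rho y <= INR (l0 (G J p y)).
  by rewrite surrogate_objE; exact: (sum_surrogate_term_le_l0 Hphi).
have Hcount y : feasible f Om delta y -> (sstar <= nb_ge alpha (G J p y))%nat.
  by move=> Hy; apply: nb_ge_pi Halpha Hsstar0 (Hpi y Hy).
have Hlower y : feasible f Om delta y -> INR sstar <= surrogate_obj J p phi rho y.
  move=> /Hcount /leP /le_INR Hy; rewrite surrogate_objE.
  exact: Rle_trans Hy (nb_ge_le_sum_surrogate_term Hphi Hdphi Halpha Hra (HG y)).
have [x0 [[Hx0 Hopt0] Hl0]] := Hsstar.
split; case=> Hx Hopt; split=> // y Hy.
- have := Hopt x0 Hx0; rewrite Hl0 => /leP /le_INR.
  by have := Hupper x; have := Hlower y Hy; lra.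
- apply: leq_trans (Hopt0 y Hy); rewrite Hl0.
  apply: (l0_le_of_sum_surrogate_term_le Hphi Hdphi Halpha Hra (HG x) (Hcount x Hx)).
  by rewrite -surrogate_objE -Hl0; have := Hopt x0 Hx0; have := Hupper x0; lra.
Qed.
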